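(* Let $M$ be a compact smooth manifold with metric $d_M$, $\phi:M\to M$ a diffeomorphism, $\omega:M\to\mathbb{R}$ continuous, $F:\mathbb{R}^N\times\mathbb{R}\to\mathbb{R}^N$, and let $f:M\to\mathbb{R}^N$ be a synchronization function of the driven system. Fix $K\in\mathbb{N}$ and define $\Gamma_K:M\to\mathbb{R}^{K+1}$ by $\Gamma_K(x)=(\omega(x),\omega(\phi(x)),\dots,\omega(\phi^K(x)))$. Assume $\Gamma_K$ has a separation modulus $\eta$, and let $P:\mathbb{R}^N\to\mathbb{R}^{K+1}$ satisfy \[ \sup_{x\in M}\|P(f(x))-\Gamma_K(x)\|\le\varepsilon \] for some $\varepsilon>0$. Then for every $\delta>0$ with $2\varepsilon<\eta(\delta)$, one has: for all $x,x'\in M$, $f(x)=f(x')$ implies $d_M(x,x')<\delta$.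
   Context: The driven system is $h_{t+1}=F(h_t,\omega(\phi^t(x_0)))$. A synchronization function is a continuous $f:M\to\mathbb{R}^N$ such that (a) $f(\phi(x))=F(f(x),\omega(x))$ for all $x\in M$, and (b) for some compact $K_0\subset\mathbb{R}^N$ and every $x_0\in M$, $h_0\in K_0$, the driven trajectory satisfies $\|h_t-f(\phi^t(x_0))\|\to0$. A separation modulus for a continuous $g:M\to\mathbb{R}^p$ is any nondecreasing function $\eta:(0,\operatorname{diam}(M)]\to(0,\infty)$ such that for all $x,x'\in M$, $d_M(x,x')\ge\delta$ implies $\|g(x)-g(x')\|\ge\eta(\delta)$. *)

From HB Require Import structures.
From mathcomp Require Import all_boot all_order all_algebra.
From mathcomp Require Import all_classical all_reals all_analysis.
From mathcomp Require Import Rstruct Rstruct_topology.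
From Stdlib Require Import Rdefinitions.

Set Implicit Arguments.
Unset Strict Implicit.
Unset Printing Implicit Defensive.

Import Order.TTheory GRing.Theory Num.Theory.
Import numFieldNormedType.Exports.

Local Open Scope classical_set_scope.
Local Open Scope ring_scope.

Definition enorm (n : nat) (v : 'rV[R]_n) : R :=
  Num.sqrt (\sum_(i < n) v ord0 i ^+ 2).

Definition diam (M : metricType R) : R :=
  sup [set mdist x y | x in [set: M] & y in [set: M]].

Definition homeomorphism (M : metricType R) (phi : M -> M) : Prop :=
  continuous phi /\
  exists psi : M -> M,
    continuous psi /\ cancel phi psi /\ cancel psi phi.

Fixpoint driven_traj (M : Type) (N : nat) (F : 'rV[R]_N -> R -> 'rV[R]_N)
  (omega : M -> R) (phi : M -> M) (x0 : M) (h0 : 'rV[R]_N) (t : nat)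
  : 'rV[R]_N :=
  match t with
  | 0 => h0
  | t'.+1 => F (driven_traj F omega phi x0 h0 t') (omega (iter t' phi x0))
  end.

Definition sync_function (M : metricType R) (N : nat)
  (F : 'rV[R]_N -> R -> 'rV[R]_N) (omega : M -> R) (phi : M -> M)
  (f : M -> 'rV[R]_N) : Prop :=
  continuous f /\
  (forall x : M, f (phi x) = F (f x) (omega x)) /\
  exists K0 : set 'rV[R]_N, compact K0 /\
    forall (x0 : M) (h0 : 'rV[R]_N), K0 h0 ->
      (fun t : nat => enorm (driven_traj F omega phi x0 h0 t - f (iter t phi x0)))
        @ \oo --> (0 : R).

Definition separation_modulus (M : metricType R) (p : nat)
  (g : M -> 'rV[R]_p) (eta : R -> R) : Prop :=
  (forall d1 d2 : R, 0 < d1 -> d1 <= d2 -> d2 <= diam M -> eta d1 <= eta d2) /\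
  (forall d : R, 0 < d -> d <= diam M -> 0 < eta d) /\
  (forall d : R, 0 < d -> d <= diam M ->
     forall x x' : M, d <= mdist x x' -> eta d <= enorm (g x - g x')).

Definition Gamma (M : Type) (omega : M -> R) (phi : M -> M) (K : nat)
  (x : M) : 'rV[R]_K.+1 :=
  \row_(i < K.+1) omega (iter i phi x).

(* If [f x = f x'], then [Gamma_K x] and [Gamma_K x'] both lie within [eps] of
   [P (f x)], hence within [2 eps < eta delta] of each other, and the
   separation modulus forbids [d(x, x') >= delta].  Compactness of [M] is only
   used to keep [d(x, x')] below [diam M], where [eta] is constrained. *)
From HB Require Import structures.
From mathcomp Require Import all_boot all_order all_algebra.
From mathcomp Require Import all_classical all_reals all_analysis.
From mathcomp Require Import Rstruct Rstruct_topology.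
From Stdlib Require Import Rdefinitions.
From mathcomp Require Import ring lra.

Import Order.TTheory GRing.Theory Num.Theory.
Import numFieldNormedType.Exports.
Local Open Scope classical_set_scope.
Local Open Scope ring_scope.

Lemma compact_mdist_bounded {K : realType} {M : metricType K} (x0 : M) :
  compact [set: M] -> exists B : K, forall y : M, mdist x0 y <= B.
Proof.
move=> /compact_near_coveringP cM.
have near_bound (x : M) : [set: M] x ->
    \forall y \near x & B \near pinfty_nbhs K, mdist x0 y <= B.
  move=> _; near=> y B => /=.
  apply: le_trans (metric_triangle x0 x y) _.
  apply: ltW; apply: (@lt_trans _ _ (mdist x0 x + 1)).
    rewrite ltrD2l; near: y.
    by rewrite -metricType_numDomainType.nbhs_nbhs_mdist; exists 1 => //=.
  by near: B; apply: nbhs_pinfty_gt; exact: num_real.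
have [B [_ HB]] := cM K (pinfty_nbhs K) _ _ near_bound.
by exists (B + 1) => y; apply: (HB (B + 1)) => //; rewrite ltrDl.
Unshelve. all: by end_near.
Qed.

Lemma mdist_le_diam {M : metricType R} (x y : M) :
  compact [set: M] -> mdist x y <= diam M.
Proof.
move=> /(compact_mdist_bounded x) [B HB].
apply: sup_upper_bound; last by exists x => //; exists y.
split; first by exists (mdist x y), x => //; exists y.
exists (B + B) => _ [a _ [b _ <-]].
apply: le_trans (metric_triangle a x b) _.
by rewrite metric_sym lerD.
Qed.

Lemma lagrange_identity {F : comPzRingType} {n} (a b : 'I_n -> F) :
  \sum_i \sum_j (a i * b j - a j * b i) ^+ 2 =
  2 * ((\sum_i a i ^+ 2) * (\sum_i b i ^+ 2) - (\sum_i a i * b i) ^+ 2).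
Proof.
set A := \sum_i a i ^+ 2; set B := \sum_i b i ^+ 2; set C := \sum_i a i * b i.
have sum_AB : \sum_i \sum_j a i ^+ 2 * b j ^+ 2 = A * B.
  by rewrite mulr_suml; apply: eq_bigr => i _; rewrite mulr_sumr.
have sum_BA : \sum_i \sum_j a j ^+ 2 * b i ^+ 2 = A * B.
  by rewrite exchange_big.
have sum_CC : \sum_i \sum_j (a i * b i) * (a j * b j) = C ^+ 2.
  by rewrite expr2 mulr_suml; apply: eq_bigr => i _; rewrite mulr_sumr.
transitivity (\sum_i \sum_j a i ^+ 2 * b j ^+ 2 + \sum_i \sum_j a j ^+ 2 * b i ^+ 2
    - 2 * \sum_i \sum_j (a i * b i) * (a j * b j)).
  rewrite mulr_sumr -big_split -sumrB; apply: eq_bigr => i _.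
  by rewrite mulr_sumr -big_split -sumrB; apply: eq_bigr => j _ /=; ring.
by rewrite sum_AB sum_BA sum_CC; ring.
Qed.

Lemma cauchy_schwarz_sum {F : realFieldType} {n} (a b : 'I_n -> F) :
  (\sum_i a i * b i) ^+ 2 <= (\sum_i a i ^+ 2) * (\sum_i b i ^+ 2).
Proof.
rewrite -subr_ge0.
have : 0 <= \sum_i \sum_j (a i * b j - a j * b i) ^+ 2.
  by apply: sumr_ge0 => i _; apply: sumr_ge0 => j _; apply: sqr_ge0.
rewrite lagrange_identity; lra.
Qed.

Lemma minkowski_sum {F : rcfType} {n} (a b : 'I_n -> F) :
  Num.sqrt (\sum_i (a i + b i) ^+ 2) <=
  Num.sqrt (\sum_i a i ^+ 2) + Num.sqrt (\sum_i b i ^+ 2).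
Proof.
set A := \sum_i a i ^+ 2; set B := \sum_i b i ^+ 2; set C := \sum_i a i * b i.
have A0 : 0 <= A by apply: sumr_ge0 => i _; apply: sqr_ge0.
have B0 : 0 <= B by apply: sumr_ge0 => i _; apply: sqr_ge0.
have expand : \sum_i (a i + b i) ^+ 2 = A + 2 * C + B.
  by rewrite /A /B /C mulr_sumr -!big_split; apply: eq_bigr => i _ /=; ring.
have C_le : C <= Num.sqrt A * Num.sqrt B.
  apply: le_trans (ler_norm C) _; rewrite -sqrtr_sqr -sqrtrM //.
  by apply: ler_wsqrtr; apply: cauchy_schwarz_sum.
rewrite expand -[X in _ <= X]ger0_norm ?addr_ge0 ?sqrtr_ge0 // -sqrtr_sqr.
apply: ler_wsqrtr; rewrite sqrrD !sqr_sqrtr // mulr2n; lra.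
Qed.

Lemma enorm_distD {n} (u v w : 'rV[R]_n) :
  enorm (u - w) <= enorm (u - v) + enorm (v - w).
Proof.
rewrite /enorm (eq_bigr (fun i => ((u - v) ord0 i + (v - w) ord0 i) ^+ 2)).
  exact: minkowski_sum.
by move=> i _; rewrite !mxE; congr (_ ^+ 2); ring.
Qed.

Lemma enorm_distC {n} (u v : 'rV[R]_n) : enorm (u - v) = enorm (v - u).
Proof.
by rewrite /enorm; congr Num.sqrt; apply: eq_bigr => i _; rewrite !mxE -sqrrN opprB.
Qed.

Lemma enorm_dist_fiber_le {T : Type} {n p} {f : T -> 'rV[R]_n} {g : T -> 'rV[R]_p}
    {P : 'rV[R]_n -> 'rV[R]_p} {eps : R} {x x' : T} :
  (forall y, enorm (P (f y) - g y) <= eps) ->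
  f x = f x' -> enorm (g x - g x') <= eps *+ 2.
Proof.
move=> Pg fxx'.
apply: le_trans (enorm_distD (g x) (P (f x)) (g x')) _.
by rewrite enorm_distC mulr2n lerD // fxx'.
Qed.

Lemma separation_modulus_mdist_lt {M : metricType R} {p} {g : M -> 'rV[R]_p}
    {eta : R -> R} {delta : R} {x x' : M} :
  compact [set: M] -> separation_modulus g eta -> 0 < delta ->
  enorm (g x - g x') < eta delta -> mdist x x' < delta.
Proof.
move=> cM [_ [_ sep]] delta0 close; rewrite ltNge; apply/negP => far.
have := sep delta delta0 (le_trans far (mdist_le_diam x x' cM)) x x' far.
by rewrite leNgt close.
Qed.

Theorem proposition4 (M : metricType R) (N K : nat)
  (phi : M -> M) (omega : M -> R) (F : 'rV[R]_N -> R -> 'rV[R]_N)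
  (f : M -> 'rV[R]_N) (eta : R -> R) (P : 'rV[R]_N -> 'rV[R]_K.+1)
  (eps : R) :
  compact [set: M] ->
  homeomorphism phi ->
  continuous omega ->
  sync_function F omega phi f ->
  separation_modulus (Gamma omega phi K) eta ->
  0 < eps ->
  (forall x : M, enorm (P (f x) - Gamma omega phi K x) <= eps) ->
  forall delta : R, 0 < delta -> 2 * eps < eta delta ->
    forall x x' : M, f x = f x' -> mdist x x' < delta.
Proof.
move=> cM _ _ _ sep _ Pf delta delta0 eps_lt x x' fxx'.
apply: (separation_modulus_mdist_lt cM sep delta0).
have close := enorm_dist_fiber_le Pf fxx'.
by apply: le_lt_trans close _; rewrite -mulr_natl.
Qed.
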